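(* Let $n\ge r\ge2$ be integers and $H$ a noncomplete graph with $\gamma(H)=1$. Then $\gamma_{(1,0,0)}^s(K_n\circ H)=2$, $\gamma_{(1,0,0)}^s(K_{1,n-1}\circ H)=2$, and $\gamma_{(1,0,0)}^s(K_{n,r}\circ H)=3$ if $r=2$ and $=4$ otherwise.
   Context: All graphs are finite and simple; $\gamma(H)$ is the domination number; $K_n$ is the complete graph and $K_{a,b}$ the complete bipartite graph. For a graph $G$, a function $f:V(G)\to\{0,1,2\}$ is a $(1,0,0)$-dominating function if every vertex $v$ with $f(v)=0$ satisfies $\sum_{u\in N(v)}f(u)\ge1$ ($N(v)$ the open neighbourhood). For adjacent $v,u$ with $f(v)=0$, $f(u)>0$, $f_{u\to v}$ is defined by $f_{u\to v}(v)=1$, $f_{u\to v}(u)=f(u)-1$, $f_{u\to v}(x)=f(x)$ otherwise. $f$ is secure if for every $v$ with $f(v)=0$ there is $u\in N(v)$ with $f(u)>0$ such that $f_{u\to v}$ is $(1,0,0)$-dominating. $\gamma_{(1,0,0)}^s(G)$ is the minimum of $\sum_v f(v)$ over secure $(1,0,0)$-dominating functions. The lexicographic product $G\circ H$ has vertex set $V(G)\times V(H)$, with $(u,v)(x,y)$ an edge iff $ux\in E(G)$, or $u=x$ and $vy\in E(H)$. *)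

From mathcomp Require Import all_boot.
Set Implicit Arguments. Unset Strict Implicit. Unset Printing Implicit Defensive.

Definition simple_graph (V : finType) (e : rel V) : Prop := symmetric e /\ irreflexive e.

Section Dom.
Variables (V : finType) (e : rel V).

Definition nbhd (v : V) : {set V} := [set u | e v u].

Definition dominating (D : {set V}) : bool :=
  [forall v, (v \in D) || [exists u in D, e v u]].
Definition domination_number : nat :=
  \big[minn/#|V|]_(D : {set V} | dominating D) #|D|.

Definition fval (f : {ffun V -> 'I_3}) (x : V) : nat := nat_of_ord (f x).
Definition weight (f : {ffun V -> 'I_3}) : nat := \sum_(x : V) fval f x.

Definition dom100 (f : {ffun V -> 'I_3}) : bool :=
  [forall v, (fval f v == 0) ==> (1 <= \sum_(u in nbhd v) fval f u)].

Definition move (f : {ffun V -> 'I_3}) (u v : V) : {ffun V -> 'I_3} :=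
  [ffun x => if x == v then inord 1 else if x == u then inord (fval f u).-1 else f x].

Definition secure_dom100 (f : {ffun V -> 'I_3}) : bool :=
  dom100 f &&
  [forall v, (fval f v == 0) ==>
     [exists u, [&& e v u, 0 < fval f u & dom100 (move f u v)]]].

(* The default #|V|.*2 bounds every weight, and the constant-1 function is always
   secure (1,0,0)-dominating, so this is the genuine minimum. *)
Definition sec100_number : nat :=
  \big[minn/#|V|.*2]_(f : {ffun V -> 'I_3} | secure_dom100 f) weight f.
End Dom.

Definition lexprod (U W : finType) (eG : rel U) (eH : rel W) : rel (U * W) :=
  fun x y => eG x.1 y.1 || ((x.1 == y.1) && eH x.2 y.2).

Definition complete_graph (n : nat) : rel 'I_n := fun x y => x != y.

Definition star_graph (n : nat) : rel 'I_n :=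
  fun x y => (x != y) && ((nat_of_ord x == 0) || (nat_of_ord y == 0)).

Definition side (n r : nat) (x : 'I_n + 'I_r) : bool := if x is inl _ then true else false.
Definition complete_bipartite (n r : nat) : rel ('I_n + 'I_r) :=
  fun x y => side x != side y.

Definition noncomplete (V : finType) (e : rel V) : Prop :=
  exists u v : V, u != v /\ ~~ e u v.

From mathcomp Require Import all_boot zify.
Set Implicit Arguments. Unset Strict Implicit. Unset Printing Implicit Defensive.

(* If f(v) = 0 and v' is not adjacent to v, then v', N(v) and N(v') together
   carry weight at least 2: a single unit defending v would, once moved to v, leave v'
   undominated.  In G o H with H noncomplete, applying this to two nonadjacent vertices of the
   copy of H over c shows that the copies over the closed neighbourhood of c in G carry weight
   at least 2.  This gives 2 for K_n o H and K_{1,n-1} o H; for K_{n,r} o H it says that every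
   column plus the opposite side weighs at least 2, and summing over the columns of each side
   gives 3 when r = 2 and 4 when r >= 3.
   Upper bounds.  Twice the indicator of a dominating set is secure, and with w0 universal in
   H the copies of w0 over a dominating set of G dominate G o H; for K_{n,2} o H the indicator
   of the copies of w0 over one vertex of the big side and both vertices of the small side is
   already secure. *)

Lemma bigmin_le_cond (I : finType) (P : pred I) (F : I -> nat) d i0 :
  P i0 -> \big[minn/d]_(i | P i) F i <= F i0.
Proof.
rewrite unlock; elim: (index_enum I) (mem_index_enum i0) => //= i s IHs.
rewrite in_cons => /orP[/eqP <- -> | i0s Pi0]; first exact: geq_minl.
by case: ifP => _; rewrite ?geq_min IHs ?orbT.
Qed.

Lemma sum_nat_le1_single (I : finType) (A : {pred I}) (F : I -> nat) i0 :
  \sum_(i in A) F i <= 1 -> i0 \in A -> 0 < F i0 ->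
  F i0 = 1 /\ {in A, forall i, i != i0 -> F i = 0}.
Proof.
move=> le1 Ai0 Fi0; move: le1; rewrite (bigD1 i0) //=.
set rest := \sum_(i | _) _ => le1.
have /eqP : rest = 0 by lia.
rewrite sum_nat_eq0 => /forallP rest0; split=> [|i Ai ni]; first by lia.
by apply/eqP; have := rest0 i; rewrite Ai ni.
Qed.

Lemma leq_add_sum2 (I : finType) (P : pred I) (F : I -> nat) i j :
  i != j -> P i -> P j -> F i + F j <= \sum_(k | P k) F k.
Proof.
move=> nij Pi Pj; rewrite (bigD1 i) //= leq_add2l (bigD1 j) /=; first exact: leq_addr.
by rewrite Pj eq_sym.
Qed.

Section SecureDomination.
Variables (V : finType) (e : rel V).
Implicit Types (f : {ffun V -> 'I_3}) (D : {set V}).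

Lemma fval_move f u v x :
  fval (move f u v) x = if x == v then 1 else if x == u then (fval f u).-1 else fval f x.
Proof.
rewrite /fval /move ffunE; case: (x == v); first by rewrite inordK.
by case: (x == u) => //; rewrite inordK // (leq_ltn_trans (leq_pred _) (ltn_ord _)).
Qed.

Lemma dom100P f :
  reflect (forall v, fval f v = 0 -> exists2 u, e v u & 0 < fval f u) (dom100 e f).
Proof.
apply: (iffP forallP) => [dom v fv0 | dom v].
  move: (dom v); rewrite fv0 /= lt0n sum_nat_eq0 negb_forall => /existsP[u].
  by rewrite negb_imply inE -lt0n => /andP[evu fu]; exists u.
apply/implyP => /eqP /dom [u evu fu]; rewrite lt0n sum_nat_eq0 negb_forall.
by apply/existsP; exists u; rewrite inE evu /= -lt0n.
Qed.

Lemma secure_dom100P f :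
  reflect (dom100 e f /\ forall v, fval f v = 0 ->
             exists u, [/\ e v u, 0 < fval f u & dom100 e (move f u v)])
          (secure_dom100 e f).
Proof.
apply: (iffP andP) => -[dom sec]; split=> //.
  move=> v /eqP fv0; move: sec => /forallP/(_ v)/implyP/(_ fv0)/existsP[u /and3P[]].
  by exists u.
apply/forallP => v; apply/implyP => /eqP/sec[u [evu fu mdom]].
by apply/existsP; exists u; apply/and3P.
Qed.

Lemma dominatingP D :
  reflect (forall v, v \notin D -> exists2 u, u \in D & e v u) (dominating e D).
Proof.
apply: (iffP forallP) => [dom v vD | dom v].
  by move: (dom v); rewrite (negbTE vD) => /existsP[u /andP[]]; exists u.
by case: (boolP (v \in D)) => //= /dom[u uD evu]; apply/existsP; exists u; apply/andP.
Qed.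

Lemma dominatingS D D' : D \subset D' -> dominating e D -> dominating e D'.
Proof.
move=> /subsetP sDD' /dominatingP dom; apply/dominatingP => v vD'.
have [|u uD evu] := dom v; last by exists u; rewrite ?sDD'.
by apply: contra vD'; apply: sDD'.
Qed.

Lemma dominating_dom100 D f :
  dominating e D -> {in D, forall x, 0 < fval f x} -> dom100 e f.
Proof.
move=> /dominatingP dom pos; apply/dom100P => v fv0.
have [|u uD evu] := dom v; last by exists u; rewrite ?pos.
by apply/negP => /pos; rewrite fv0.
Qed.

Definition scaled_indicator (k : nat) D : {ffun V -> 'I_3} := [ffun x => inord (k * (x \in D))].

Lemma fval_scaled_indicator k D x : k < 3 -> fval (scaled_indicator k D) x = k * (x \in D).
Proof. by move=> k3; rewrite /fval ffunE inordK //; case: (x \in D); rewrite ?muln1 ?muln0. Qed.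

Lemma weight_scaled_indicator k D : k < 3 -> weight (scaled_indicator k D) = k * #|D|.
Proof.
move=> k3; rewrite /weight (bigID (mem D)) /= [X in _ + X]big1 => [|x /negbTE xD]; last first.
  by rewrite fval_scaled_indicator // xD muln0.
rewrite addn0 mulnC -sum_nat_const; apply: eq_big => // x xD.
by rewrite fval_scaled_indicator // xD muln1.
Qed.

Lemma secure_dom100_double_indicator D :
  dominating e D -> secure_dom100 e (scaled_indicator 2 D).
Proof.
move=> domD; have dom2 := dominating_dom100 domD.
apply/secure_dom100P; split=> [|v].
  by apply: dom2 => x xD; rewrite fval_scaled_indicator ?xD.
rewrite fval_scaled_indicator //; case: (boolP (v \in D)) => // vD _.
have [u uD evu] := elimT (dominatingP D) domD v vD.
exists u; split; rewrite ?fval_scaled_indicator ?uD //.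
apply: dom2 => x xD; rewrite fval_move fval_scaled_indicator ?uD //.
by case: (x == v); case: (x == u); rewrite ?fval_scaled_indicator ?xD.
Qed.

Lemma secure_dom100_indicator D :
  dominating e D ->
  (forall v, v \notin D -> exists2 u, u \in D & e v u /\ dominating e (v |: (D :\ u))) ->
  secure_dom100 e (scaled_indicator 1 D).
Proof.
move=> domD swap; apply/secure_dom100P; split=> [|v].
  by apply: (dominating_dom100 domD) => x xD; rewrite fval_scaled_indicator ?xD.
rewrite fval_scaled_indicator //; case: (boolP (v \in D)) => // vD _.
have [u uD [evu domS]] := swap v vD.
exists u; split; rewrite ?fval_scaled_indicator ?uD //.
apply: (dominating_dom100 domS) => x; rewrite fval_move !inE.
by case: (x == v) => //= /andP[/negbTE -> xD]; rewrite fval_scaled_indicator ?xD.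
Qed.

Lemma secure_dom100_nonadjacent_pair f (S : {set V}) v v' :
  secure_dom100 e f -> v' != v -> ~~ e v' v -> fval f v = 0 ->
  v' \in S -> nbhd e v \subset S -> nbhd e v' \subset S ->
  2 <= \sum_(u in S) fval f u.
Proof.
move=> /secure_dom100P[_ sec] nv'v nev'v fv0 v'S /subsetP NvS /subsetP Nv'S.
rewrite leqNgt ltnS; apply/negP => le1.
have [u [evu fu mdom]] := sec v fv0.
have [|fu1 S0] := sum_nat_le1_single le1 _ fu; first by rewrite NvS ?inE.
(* after the move from [u], the only positive vertex of [S] is [v], which [v'] does not see *)
have gv'0 : fval (move f u v) v' = 0.
  rewrite fval_move (negbTE nv'v); case: eqP => [_|/eqP nv'u]; first by rewrite fu1.
  exact: S0.
have [w ev'w] := elimT (dom100P _) mdom v' gv'0.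
rewrite fval_move; case: eqP => [wv|_]; first by rewrite -wv ev'w in nev'v.
case: eqP => [_|/eqP nwu]; first by rewrite fu1.
by rewrite S0 ?Nv'S ?inE.
Qed.

Lemma sec100_number_le f : secure_dom100 e f -> sec100_number e <= weight f.
Proof. exact: bigmin_le_cond. Qed.

Lemma sec100_number_ge k :
  (forall f, secure_dom100 e f -> k <= weight f) -> k <= sec100_number e.
Proof.
move=> lb; apply: (big_ind (fun m => k <= m)) => [||f /lb //]; last first.
  by move=> m1 m2 km1 km2; rewrite leq_min km1.
have := lb _ (secure_dom100_double_indicator (D := setT) _).
rewrite weight_scaled_indicator // cardsT mul2n; apply.
by apply/dominatingP => v; rewrite inE.
Qed.

Lemma domination_number1_vertex : domination_number e = 1 -> exists x, dominating e [set x].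
Proof.
have [D domD <-] : exists2 D, dominating e D & #|D| = domination_number e.
  apply: (big_ind (fun k => exists2 D, dominating e D & #|D| = k)).
  - by exists setT; [apply/dominatingP => v; rewrite inE | rewrite cardsT].
  - by move=> k1 k2 h1 h2; rewrite /minn; case: ifP.
  - by move=> D domD; exists D.
by move=> /eqP/cards1P[x Dx]; exists x; rewrite -Dx.
Qed.

End SecureDomination.

Section LexicographicProduct.
Variables (U W : finType) (eG : rel U) (eH : rel W).
Local Notation E := (lexprod eG eH).
Implicit Types (f : {ffun U * W -> 'I_3}).

Definition column_weight f (c : U) : nat := \sum_(w : W) fval f (c, w).

Lemma sum_by_columns f (P : pred U) :
  \sum_(x | P x.1) fval f x = \sum_(c | P c) column_weight f c.
Proof. by rewrite pair_big_dep /=; apply: eq_big => [[c w]|[c w] _] //=; rewrite andbT. Qed.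

Lemma weight_by_columns f : weight f = \sum_c column_weight f c.
Proof. exact: sum_by_columns xpredT. Qed.

Lemma dominating_setX (D0 : {set U}) (D1 : {set W}) :
  dominating eG D0 -> dominating eH D1 -> dominating E (setX D0 D1).
Proof.
move=> /dominatingP domG /dominatingP domH; apply/dominatingP => -[c w]; rewrite in_setX.
have [w1 w1D1] : exists w1, w1 \in D1.
  by case: (boolP (w \in D1)) => [|/domH[w1]]; [exists w | exists w1].
case: (boolP (c \in D0)) => [cD0 /= wD1 | /domG[d dD0 ecd] _].
  have [u uD1 ewu] := domH w wD1.
  by exists (c, u); rewrite ?in_setX ?cD0 //= /lexprod /= eqxx ewu orbT.
by exists (d, w1); rewrite ?in_setX ?dD0 //= /lexprod /= ecd.
Qed.

Hypotheses (irrG : irreflexive eG) (symH : symmetric eH) (ncH : noncomplete eH).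

(* One of (c, p), (c, q) is zero unless column c alone has weight 2, and the neighbourhoods
   of both lie over the closed neighbourhood of c. *)
Lemma secure_closed_nbhd_columns f c :
  secure_dom100 E f -> 2 <= \sum_(d in c |: nbhd eG c) column_weight f d.
Proof.
move=> secf; rewrite -sum_by_columns.
have [p [q [npq pq]]] := ncH; have qp : ~~ eH q p by rewrite symH.
wlog fp0 : p q npq pq qp / fval f (c, p) = 0 => [gen|].
  case: (posnP (fval f (c, p))) => [fp0|fp]; first exact: (gen p q).
  case: (posnP (fval f (c, q))) => [fq0|fq]; first by apply: (gen q p); rewrite // eq_sym.
  have ncpq : (c, p) != (c, q) by rewrite xpair_eqE eqxx.
  by apply: leq_trans (leq_add_sum2 _ ncpq _ _); rewrite ?setU11 // -addn1 leq_add.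
have ncqp : (c, q) != (c, p) by rewrite xpair_eqE eqxx eq_sym.
set S := [set x : U * W | x.1 \in c |: nbhd eG c].
rewrite (eq_bigl [in S]) => [|x /=]; last by rewrite [x \in S]inE.
have nbhd_sub w : nbhd E (c, w) \subset S.
  apply/subsetP => -[d w']; rewrite !inE /lexprod /=.
  by case/orP=> [->|/andP[/eqP <- _]]; rewrite ?eqxx ?orbT.
apply: (secure_dom100_nonadjacent_pair (S := S) secf ncqp); rewrite ?nbhd_sub ?inE ?eqxx //.
by rewrite /lexprod /= irrG eqxx.
Qed.

Lemma secure_lexprod_weight_ge2 f (c : U) : secure_dom100 E f -> 2 <= weight f.
Proof.
move=> /(secure_closed_nbhd_columns c) /leq_trans; apply.
by rewrite weight_by_columns [X in _ <= X](bigID [in c |: nbhd eG c]) leq_addr.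
Qed.

Lemma sec100_number_lexprod_universal c w0 :
  dominating eG [set c] -> dominating eH [set w0] -> sec100_number E = 2.
Proof.
move=> domc domw0; apply/eqP; rewrite eqn_leq; apply/andP; split.
  have := sec100_number_le (secure_dom100_double_indicator (dominating_setX domc domw0)).
  by rewrite weight_scaled_indicator // cardsX !cards1.
by apply: sec100_number_ge => f; apply: secure_lexprod_weight_ge2 c.
Qed.

End LexicographicProduct.

Lemma side_weights_bound (n r a b : nat) :
  2 <= r <= n -> n * (2 - b) <= a -> r * (2 - a) <= b -> (if r == 2 then 3 else 4) <= a + b.
Proof. by case: b => [|[|b]]; case: a => [|[|a]]; case: eqP; lia. Qed.

Section CompleteBipartite.
Variables (n r : nat) (W : finType) (eH : rel W).
Local Notation K := (@complete_bipartite n r).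
Local Notation E := (lexprod K eH).

Lemma complete_bipartite_irr : irreflexive K.
Proof. by move=> x; rewrite /complete_bipartite eqxx. Qed.

Lemma dominating_complete_bipartite (a : 'I_n) (b : 'I_r) : dominating K [set inl a; inr b].
Proof.
apply/dominatingP => -[a'|b'] _; [exists (inr b) | exists (inl a)];
  by rewrite ?inE ?eqxx ?orbT.
Qed.

Lemma weight_complete_bipartite (f : {ffun ('I_n + 'I_r) * W -> 'I_3}) :
  weight f = \sum_a column_weight f (inl a) + \sum_b column_weight f (inr b).
Proof. by rewrite weight_by_columns big_sumType. Qed.

Lemma sec100_number_complete_bipartite_le4 (a : 'I_n) (b : 'I_r) w0 :
  dominating eH [set w0] -> sec100_number E <= 4.
Proof.
move=> domw0; have domD := dominating_setX (dominating_complete_bipartite a b) domw0.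
have := sec100_number_le (secure_dom100_double_indicator domD).
by rewrite weight_scaled_indicator // cardsX cards1 cards2.
Qed.

Hypotheses (symH : symmetric eH) (ncH : noncomplete eH).

Lemma secure_complete_bipartite_weight f :
  2 <= r <= n -> secure_dom100 E f -> (if r == 2 then 3 else 4) <= weight f.
Proof.
move=> rn secf; rewrite weight_complete_bipartite.
set A := \sum_a _; set B := \sum_b _.
have col c := secure_closed_nbhd_columns complete_bipartite_irr symH ncH c secf.
have colA (a : 'I_n) : 2 <= column_weight f (inl a) + B.
  have := col (inl a); rewrite big_sumType /=.
  under eq_bigl => i do rewrite !inE /complete_bipartite /= orbF (inj_eq inl_inj).
  by under [X in _ + X]eq_bigl => i do rewrite !inE /complete_bipartite /=; rewrite big_pred1_eq.
have colB (b : 'I_r) : 2 <= column_weight f (inr b) + A.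
  have := col (inr b); rewrite big_sumType /=.
  under eq_bigl => i do rewrite !inE /complete_bipartite /=.
  under [X in _ + X]eq_bigl => i do rewrite !inE /complete_bipartite /= orbF (inj_eq inr_inj).
  by rewrite big_pred1_eq addnC.
have lbA : n * (2 - B) <= A.
  rewrite mulnC -iter_addn_0 -big_const_ord.
  by apply: leq_sum => a _; rewrite leq_subLR addnC colA.
have lbB : r * (2 - A) <= B.
  rewrite mulnC -iter_addn_0 -big_const_ord.
  by apply: leq_sum => b _; rewrite leq_subLR addnC colB.
exact: side_weights_bound rn lbA lbB.
Qed.
End CompleteBipartite.

Lemma sec100_number_complete_bipartite2_le3 n (W : finType) (eH : rel W) (a0 : 'I_n) w0 :
  dominating eH [set w0] -> sec100_number (lexprod (@complete_bipartite n 2) eH) <= 3.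
Proof.
move=> domw0.
have domB : dominating (@complete_bipartite n 2) [set inr ord0; inr ord_max].
  apply/dominatingP => -[a|b]; first by exists (inr ord0); rewrite ?inE ?eqxx.
  by case: b => -[|[|//]] ?; rewrite !inE.
pose D : {set ('I_n + 'I_2) * W} := setX (inl a0 |: [set inr ord0; inr ord_max]) [set w0].
have domD : dominating (lexprod (@complete_bipartite n 2) eH) D.
  apply: dominatingS (dominating_setX domB domw0).
  by apply/subsetP => -[c w]; rewrite !inE /= => /andP[-> ->]; rewrite orbT.
have := sec100_number_le (secure_dom100_indicator domD _).
rewrite weight_scaled_indicator // cardsX cards1 cardsU1 cards2 !inE /=; apply.
move=> -[[a|b] y] vD.
  exists (inr ord0, w0); first by rewrite !inE /= eqxx ?orbT.
  split=> //.
  apply: dominatingS (dominating_setX (dominating_complete_bipartite a0 ord_max) domw0).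
  apply/subsetP => -[c w]; rewrite !inE /=.
  by case/andP => /orP[]/eqP-> /eqP->; rewrite !xpair_eqE /= !eqxx ?orbT.
exists (inl a0, w0); first by rewrite !inE /= !eqxx.
split=> //; apply: dominatingS (dominating_setX domB domw0).
apply/subsetP => -[c w]; rewrite !inE /=.
by case/andP => /orP[]/eqP-> /eqP->; rewrite !xpair_eqE /= !eqxx ?orbT.
Qed.

Lemma sec100_number_complete_bipartite n r (W : finType) (eH : rel W) w0 :
  2 <= r <= n -> symmetric eH -> noncomplete eH -> dominating eH [set w0] ->
  sec100_number (lexprod (@complete_bipartite n r) eH) = if r == 2 then 3 else 4.
Proof.
move=> rn symH ncH domw0; apply/eqP; rewrite eqn_leq; apply/andP; split; last first.
  by apply: sec100_number_ge => f /(secure_complete_bipartite_weight symH ncH rn).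
have [r_gt1 le_rn] := andP rn.
pose a0 : 'I_n := Ordinal (leq_trans (ltnW r_gt1) le_rn).
case: eqP => [r2|_].
  by subst r; exact: sec100_number_complete_bipartite2_le3 a0 _ domw0.
exact: sec100_number_complete_bipartite_le4 a0 (Ordinal (ltnW r_gt1)) _ domw0.
Qed.

Lemma complete_graph_irr n : irreflexive (@complete_graph n).
Proof. by move=> x; rewrite /complete_graph eqxx. Qed.

Lemma dominating_complete_graph n (c : 'I_n) : dominating (@complete_graph n) [set c].
Proof. by apply/dominatingP => v; rewrite inE => nvc; exists c; rewrite ?inE. Qed.

Lemma star_graph_irr n : irreflexive (@star_graph n).
Proof. by move=> x; rewrite /star_graph eqxx. Qed.

Lemma dominating_star_graph_centre n (c : 'I_n) :
  nat_of_ord c = 0 -> dominating (@star_graph n) [set c].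
Proof.
move=> c0; apply/dominatingP => v; rewrite inE => nvc.
by exists c; rewrite ?inE //= /star_graph nvc c0 orbT.
Qed.

Theorem corollary16 (n r : nat) (W : finType) (eH : rel W) :
  (2 <= r)%N -> (r <= n)%N ->
  simple_graph eH -> noncomplete eH -> domination_number eH = 1%N ->
  [/\ sec100_number (lexprod (@complete_graph n) eH) = 2%N,
      sec100_number (lexprod (@star_graph n) eH) = 2%N
    & sec100_number (lexprod (@complete_bipartite n r) eH) = (if r == 2 then 3 else 4)%N].
Proof.
move=> r_ge2 r_le_n [symH _] ncH /domination_number1_vertex [w0 domw0].
have n_gt0 : 0 < n := leq_trans (ltnW r_ge2) r_le_n.
pose c0 := Ordinal n_gt0.
split.
- apply: (sec100_number_lexprod_universal (@complete_graph_irr n) symH ncH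
    (dominating_complete_graph c0) domw0).
- apply: (sec100_number_lexprod_universal (@star_graph_irr n) symH ncH
    (dominating_star_graph_centre (c := c0) erefl) domw0).
- by apply: (sec100_number_complete_bipartite _ symH ncH domw0); rewrite r_ge2 r_le_n.
Qed.
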